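(* Let $R\in\mathcal R_{\rm s}^{n_y}$. Let $A$ be the nominal closed-loop matrix (the matrix $A_R$ with $R=I$), let $P=P^{\top}>0$ satisfy $AP+PA^{\top}+BB^{\top}=0$, let $P_R$ satisfy $A_RP_R+P_RA_R^{\top}+BB^{\top}=0$, and set $\Delta P_R=P_R-P$, $E_R=(I-R)C_{\rm m,o}$, $C_{\rm r}=[0,\ C_{\rm m,o}]$. Assume that $\|\Delta P_R\|_2\le\delta_R\|P\|_2$ for some $\delta_R\in[0,1)$ and that $\delta_R\,\kappa(P)<1$. Then $$\frac{\operatorname{tr}\{C_{\rm p}P_RC_{\rm p}^{\top}\}}{\operatorname{tr}\{C_{{\rm r},R}P_RC_{{\rm r},R}^{\top}\}}\le \frac{\kappa(P)(1+\delta_R)}{1-\delta_R\kappa(P)}\cdot\frac{\|C_{\rm p}\|_F^2}{\|E_R\|_F^2+\|C_{\rm r}\|_F^2}.$$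
   Context: Data: $A_{\rm p}\in\mathbb R^{n_x\times n_x}$, $B_{\rm p}\in\mathbb R^{n_x\times n_u}$, $B_w,B_{\hat w}\in\mathbb R^{n_x\times n_x}$, $C_{\rm m,o}\in\mathbb R^{n_y\times n_x}$, $C_{\rm p,o}\in\mathbb R^{n_{y_{\rm p}}\times n_x}$, $D_{\rm p,o}\in\mathbb R^{n_{y_{\rm p}}\times n_u}$, $K\in\mathbb R^{n_x\times n_y}$, $L\in\mathbb R^{n_u\times n_x}$, with $(A_{\rm p},B_{\rm p})$ controllable and $(A_{\rm p},C_{\rm m,o})$ observable. For $R\in\mathbb R^{n_y\times n_y}$: $$A_R=\begin{bmatrix}A_{\rm p}+B_{\rm p}L & -B_{\rm p}L\\ K(I-R)C_{\rm m,o} & A_{\rm p}-KC_{\rm m,o}\end{bmatrix},\quad B=\begin{bmatrix}B_w&0\\ B_w&-B_{\hat w}\end{bmatrix},$$ $C_{{\rm r},R}=[(R-I)C_{\rm m,o},\ C_{\rm m,o}]$, $C_{\rm p}=[C_{\rm p,o}+D_{\rm p,o}L,\ -D_{\rm p,o}L]$. So $A=A_I=\begin{bmatrix}A_{\rm p}+B_{\rm p}L & -B_{\rm p}L\\ 0 & A_{\rm p}-KC_{\rm m,o}\end{bmatrix}$. $\mathcal R_{\rm s}^{n_y}=\{R: A_R\text{ is Hurwitz}\}$. $\|\cdot\|_2$ is the spectral norm, $\|\cdot\|_F$ the Frobenius norm, and for symmetric positive definite $P$, $\kappa(P)=\lambda_{\max}(P)/\lambda_{\min}(P)$. *)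

From HB Require Import structures.
From mathcomp Require Import all_boot all_order all_algebra.
From mathcomp Require Import classical_sets reals.
From mathcomp Require Import complex.
Set Implicit Arguments. Unset Strict Implicit. Unset Printing Implicit Defensive.
Import Order.TTheory GRing.Theory Num.Theory.
Local Open Scope ring_scope.

Section Defs.
Variable R : realType.

Definition hurwitz n (M : 'M[R]_n) : Prop :=
  forall z : R[i], root (map_poly (fun x : R => x%:C%C) (char_poly M)) z ->
    Re z < 0.

Definition controllable n m (A : 'M[R]_n) (B : 'M[R]_(n, m)) : Prop :=
  \rank (\sum_(k < n) <<(A ^+ k *m B)^T>>)%MS = n.
Definition observable n p (A : 'M[R]_n) (C : 'M[R]_(p, n)) : Prop :=
  \rank (\sum_(k < n) <<C *m A ^+ k>>)%MS = n.

Definition sym_pos_def n (P : 'M[R]_n) : Prop :=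
  P^T = P /\ forall x : 'cV[R]_n, x != 0 -> 0 < (x^T *m P *m x) 0 0.

Definition lambda_max n (M : 'M[R]_n) : R := sup [set a : R | eigenvalue M a]%classic.
Definition lambda_min n (M : 'M[R]_n) : R := inf [set a : R | eigenvalue M a]%classic.
Definition kappa n (P : 'M[R]_n) : R := lambda_max P / lambda_min P.

Definition norm2 m n (M : 'M[R]_(m, n)) : R := Num.sqrt (lambda_max (M^T *m M)).
Definition normF m n (M : 'M[R]_(m, n)) : R :=
  Num.sqrt (\sum_i \sum_j (M i j) ^+ 2).

Variables (nx nu ny nyp : nat).
Variables (Ap : 'M[R]_nx) (Bp : 'M[R]_(nx, nu)) (Cmo : 'M[R]_(ny, nx))
  (Cpo : 'M[R]_(nyp, nx)) (Dpo : 'M[R]_(nyp, nu)) (K : 'M[R]_(nx, ny))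
  (L : 'M[R]_(nu, nx)).

Definition A_R (Rm : 'M[R]_ny) : 'M[R]_(nx + nx) :=
  block_mx (Ap + Bp *m L) (- (Bp *m L))
           (K *m (1%:M - Rm) *m Cmo) (Ap - K *m Cmo).
Definition Bcl (Bw Bwh : 'M[R]_nx) : 'M[R]_(nx + nx) :=
  block_mx Bw 0 Bw (- Bwh).
Definition C_rR (Rm : 'M[R]_ny) : 'M[R]_(ny, nx + nx) :=
  row_mx ((Rm - 1%:M) *m Cmo) Cmo.
Definition C_p : 'M[R]_(nyp, nx + nx) := row_mx (Cpo + Dpo *m L) (- (Dpo *m L)).
Definition C_r : 'M[R]_(ny, nx + nx) := row_mx 0 Cmo.
Definition E_R (Rm : 'M[R]_ny) : 'M[R]_(ny, nx) := (1%:M - Rm) *m Cmo.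

End Defs.

From HB Require Import structures.
From mathcomp Require Import all_boot all_order all_algebra.
From mathcomp Require Import classical_sets reals complex spectral sesquilinear.
From mathcomp Require Import ring lra.
Set Implicit Arguments. Unset Strict Implicit. Unset Printing Implicit Defensive.
Import Order.TTheory GRing.Theory Num.Theory.
Local Open Scope ring_scope.

(* Writing l and L for the extreme eigenvalues of P, the spectral theorem
   gives l |x|^2 <= x^T P x <= L |x|^2, and by Cauchy-Schwarz
   |x^T (P_R - P) x| <= ||P_R - P||_2 |x|^2 <= delta_R L |x|^2.  Hence
   (l - delta_R L) |x|^2 <= x^T P_R x <= (1 + delta_R) L |x|^2, and summing
   over the rows of C bounds tr(C P_R C^T) between (l - delta_R L) ||C||_F^2
   and (1 + delta_R) L ||C||_F^2.  Divide the upper bound for C_p by the lower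
   bound for C_{r,R}, whose squared Frobenius norm is ||E_R||_F^2 + ||C_r||_F^2,
   and note (1 + delta_R) L / (l - delta_R L)
   = kappa(P) (1 + delta_R) / (1 - delta_R kappa(P)). *)

Section RealDot.
Variable R : realFieldType.

Definition vdot n (u v : 'cV[R]_n) : R := (u^T *m v) 0 0.

Lemma vdotE n (u v : 'cV[R]_n) : vdot u v = \sum_i u i 0 * v i 0.
Proof. by rewrite /vdot mxE; apply: eq_bigr => i _; rewrite mxE. Qed.

Lemma vdotC n (u v : 'cV[R]_n) : vdot u v = vdot v u.
Proof. by rewrite !vdotE; apply: eq_bigr => i _; rewrite mulrC. Qed.

Lemma vdot_ge0 n (u : 'cV[R]_n) : 0 <= vdot u u.
Proof. by rewrite vdotE sumr_ge0 // => i _; rewrite -expr2 sqr_ge0. Qed.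

Lemma vdot_eq0 n (u : 'cV[R]_n) : (vdot u u == 0) = (u == 0).
Proof.
apply/idP/eqP => [|->]; last by rewrite vdotE big1 // => i _; rewrite mxE mul0r.
rewrite vdotE psumr_eq0 => [/allP u0|i _]; last by rewrite -expr2 sqr_ge0.
apply/colP => i; rewrite mxE; apply/eqP; rewrite -sqrf_eq0 expr2.
exact: u0 (mem_index_enum i).
Qed.

Lemma vdot_gt0 n (u : 'cV[R]_n) : u != 0 -> 0 < vdot u u.
Proof. by rewrite lt_def vdot_eq0 vdot_ge0 andbT. Qed.

Lemma vdot_mulmxr m n (A : 'M[R]_(m, n)) u v : vdot u (A *m v) = vdot (A^T *m u) v.
Proof. by rewrite /vdot trmx_mul trmxK mulmxA. Qed.

Lemma vdot_subZ n t (u v : 'cV[R]_n) :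
  vdot (t *: u - v) (t *: u - v) = t ^+ 2 * vdot u u - 2 * t * vdot u v + vdot v v.
Proof.
rewrite !vdotE !mulr_sumr -sumrN -!big_split /=.
by apply: eq_bigr => i _; rewrite !mxE; ring.
Qed.

Lemma vdot_CauchySchwarz n (u v : 'cV[R]_n) : vdot u v ^+ 2 <= vdot u u * vdot v v.
Proof.
have [->|u0] := eqVneq u 0; first by rewrite /vdot !linear0 !mul0mx mxE expr0n mul0r.
have uu0 := vdot_gt0 u0.
have := vdot_ge0 (vdot u v / vdot u u *: u - v); rewrite vdot_subZ.
have -> : (vdot u v / vdot u u) ^+ 2 * vdot u u - 2 * (vdot u v / vdot u u) * vdot u v
          + vdot v v = vdot v v - vdot u v ^+ 2 / vdot u u.
  by field; rewrite gt_eqF.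
by rewrite subr_ge0 ler_pdivrMr // mulrC.
Qed.

Lemma eigenvalue_vdot n (A : 'M[R]_n) a : eigenvalue A a ->
  exists2 x : 'cV[R]_n, x != 0 & vdot x (A *m x) = a * vdot x x.
Proof.
case/eigenvalueP => v vA v0; exists v^T; first by rewrite trmx_eq0.
by rewrite /vdot trmxK mulmxA vA -scalemxAl mxE.
Qed.

End RealDot.

Lemma exp_conj_diag_mx (F : fieldType) n (M : 'M[F]_n) (d : 'rV[F]_n) k :
  M \in unitmx ->
  (invmx M *m diag_mx d *m M) ^+ k = invmx M *m diag_mx (\row_j d 0 j ^+ k) *m M.
Proof.
move=> Mu; elim: k => [|k IHk].
  have -> : \row_j d 0 j ^+ 0 = const_mx 1 by apply/rowP => j; rewrite !mxE.
  by rewrite diag_const_mx mulmx1 mulVmx.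
rewrite exprS IHk -mulmxE !mulmxA mulmxK // -[_ *m diag_mx _ *m diag_mx _]mulmxA.
by rewrite mulmx_diag; congr (_ *m diag_mx _ *m _); apply/rowP => j; rewrite !mxE exprS.
Qed.

Section UnitaryDiagForm.
Local Open Scope sesquilinear_scope.

Lemma unitary_diag_form (C : numClosedFieldType) n (M : 'M[C]_n) (E : 'rV[C]_n)
    (u : 'cV[C]_n) : M \is unitarymx ->
  (u ^t* *m (invmx M *m diag_mx E *m M) *m u) 0 0
  = \sum_i E 0 i * `|(M *m u) i 0| ^+ 2.
Proof.
move=> Mu; rewrite invmx_unitary // !mulmxA -map_mxM -trmx_mul -mulmxA.
rewrite mul_mx_diag mxE; apply: eq_bigr => i _.
by rewrite !mxE normCK mulrAC [RHS]mulrC [X in X * E 0 i]mulrC.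
Qed.

End UnitaryDiagForm.

Section RealSymmetricSpectrum.
Local Open Scope sesquilinear_scope.
Variable R : rcfType.
Local Notation toC := (real_complex R).

Lemma map_real_complex_trmx m n (A : 'M[R]_(m, n)) :
  (map_mx toC A)^T = (map_mx toC A) ^t*.
Proof. by apply/matrixP => i j; rewrite !mxE conj_Creal // complex_real. Qed.

Lemma sym_spectral_weights n (S : 'M[R]_n) : S^T = S ->
  exists d : 'I_n -> R, (forall i, eigenvalue S (d i)) /\
  forall x : 'cV[R]_n, exists2 w : 'I_n -> R, (forall i, 0 <= w i) &
    forall k, vdot x (S ^+ k *m x) = \sum_i d i ^+ k * w i.
Proof.
move=> Ssym; set Sc := map_mx toC S.
have Sc_herm : Sc \is hermsymmx.
  apply/is_hermitianmxP; rewrite expr0 scale1r; apply/matrixP => i j.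
  by rewrite !mxE conj_Creal ?complex_real // -[in RHS]Ssym mxE.
have /orthomx_spectralP ScE := hermitian_normalmx Sc_herm.
have Mu := spectral_unitarymx Sc; have Mun := unitarymx_unit Mu.
have /mxOverP D_real := hermitian_spectral_diag_real Sc_herm.
set M := spectralmx Sc in ScE Mu Mun; set D := spectral_diag Sc in ScE D_real.
have ReD i : toC (complex.Re (D 0 i)) = D 0 i := RRe_real (D_real 0 i).
exists (fun i => complex.Re (D 0 i)); split.
  move=> i; suff : root (char_poly Sc) (D 0 i).
    by rewrite -(ReD i) /Sc -map_char_poly fmorph_root eigenvalue_root_char.
  rewrite -eigenvalue_root_char; apply/eigenvalueP; exists (row i M).
    by rewrite -row_mul ScE !mulmxA mulmxV // mul1mx mul_diag_mx;
      apply/rowP => j; rewrite !mxE.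
  apply/eqP => Mi0; have /rowP/(_ i) := congr1 (row i) (unitarymxP Mu).
  by rewrite row_mul Mi0 mul0mx !mxE eqxx => /esym/eqP; rewrite oner_eq0.
(* The weights are |(M x)_i|^2, for the unitary M diagonalizing S over R[i]. *)
move=> x; set y := M *m map_mx toC x.
exists (fun i => complex.Re (y i 0) ^+ 2 + complex.Im (y i 0) ^+ 2).
  by move=> i; rewrite addr_ge0 ?sqr_ge0.
have toC_vdot (A : 'M[R]_n) :
    toC (vdot x (A *m x)) = ((map_mx toC x) ^t* *m map_mx toC A *m map_mx toC x) 0 0.
  by rewrite /vdot -map_real_complex_trmx map_trmx -!map_mxM [RHS]mxE mulmxA.
move=> k; apply: complexI; rewrite rmorph_sum /= toC_vdot.
have -> : map_mx toC (S ^+ k) = Sc ^+ k by exact: rmorphXn.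
rewrite ScE exp_conj_diag_mx // unitary_diag_form //.
by apply: eq_bigr => i _; rewrite mxE rmorphM rmorphXn /= ReD add_Re2_Im2.
Qed.

End RealSymmetricSpectrum.

Section EigenvalueBounds.
Variables (R : realType) (n : nat).
Implicit Types (A : 'M[R]_n) (c : R).

Lemma eigenvalue_le_vdot A c a : (forall x, vdot x (A *m x) <= c * vdot x x) ->
  eigenvalue A a -> a <= c.
Proof.
move=> Ac /eigenvalue_vdot[x x0 Ax]; have := Ac x.
by rewrite Ax ler_pM2r ?vdot_gt0.
Qed.

Lemma eigenvalue_ge_vdot A c a : (forall x, c * vdot x x <= vdot x (A *m x)) ->
  eigenvalue A a -> c <= a.
Proof.
move=> Ac /eigenvalue_vdot[x x0 Ax]; have := Ac x.
by rewrite Ax ler_pM2r ?vdot_gt0.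
Qed.

(* [0 <= c] accounts for an empty spectrum, whose [sup] is 0. *)
Lemma lambda_max_le A c : 0 <= c -> (forall x, vdot x (A *m x) <= c * vdot x x) ->
  lambda_max A <= c.
Proof.
rewrite /lambda_max => c0 Ac.
have [->|/set0P ne] := eqVneq [set a | eigenvalue A a]%classic set0.
  by rewrite sup0.
by apply: ge_sup => // a; apply: eigenvalue_le_vdot.
Qed.

Lemma lambda_min_ge A c a : eigenvalue A a ->
  (forall x, c * vdot x x <= vdot x (A *m x)) -> c <= lambda_min A.
Proof.
by move=> Aa Ac; apply: lb_le_inf; [exists a | move=> b; apply: eigenvalue_ge_vdot].
Qed.

End EigenvalueBounds.

Section SpectralWeights.
Variables (R : realType) (n : nat) (S : 'M[R]_n) (d : 'I_n -> R).
Hypothesis d_eig : forall i, eigenvalue S (d i).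
Hypothesis S_weights : forall x : 'cV[R]_n, exists2 w : 'I_n -> R,
  (forall i, 0 <= w i) & forall k, vdot x (S ^+ k *m x) = \sum_i d i ^+ k * w i.

Let vdot_expr0 x : vdot x x = vdot x (S ^+ 0 *m x).
Proof. by rewrite expr0 mul1mx. Qed.

Lemma weights_vdot_le k c : (forall i, d i ^+ k <= c) ->
  forall x, vdot x (S ^+ k *m x) <= c * vdot x x.
Proof.
move=> dc x; have [w w0 Sw] := S_weights x.
rewrite vdot_expr0 !Sw mulr_sumr.
by apply: ler_sum => i _; rewrite expr0 mul1r ler_wpM2r.
Qed.

Lemma weights_vdot_ge k c : (forall i, c <= d i ^+ k) ->
  forall x, c * vdot x x <= vdot x (S ^+ k *m x).
Proof.
move=> dc x; have [w w0 Sw] := S_weights x.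
rewrite vdot_expr0 !Sw mulr_sumr.
by apply: ler_sum => i _; rewrite expr0 mul1r ler_wpM2r.
Qed.

(* Bounds the spectrum, as [ub_le_sup] and [ge_inf] require. *)
Let bound := \sum_i `|d i|.

Let d_le_bound i : `|d i| <= bound.
Proof. by rewrite /bound (bigD1 i) //= lerDl sumr_ge0. Qed.

Lemma d_le_lambda_max i : d i <= lambda_max S.
Proof.
apply: ub_le_sup (d_eig i); exists bound => a /eigenvalue_le_vdot; apply.
apply: (weights_vdot_le (k := 1)) => j.
by rewrite expr1 (le_trans (ler_norm _)).
Qed.

Lemma lambda_min_le_d i : lambda_min S <= d i.
Proof.
apply: ge_inf (d_eig i); exists (- bound) => a /eigenvalue_ge_vdot; apply.
apply: (weights_vdot_ge (k := 1)) => j.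
by rewrite expr1 lerNl (le_trans (ler_norm _)) ?normrN.
Qed.

End SpectralWeights.

Section SymmetricMatrices.
Variables (R : realType) (n : nat).

Lemma sym_rayleigh (S : 'M[R]_n) x : S^T = S ->
  lambda_min S * vdot x x <= vdot x (S *m x) <= lambda_max S * vdot x x.
Proof.
move=> /sym_spectral_weights[d [d_eig S_w]]; rewrite -[S in S *m x]expr1.
rewrite (weights_vdot_ge S_w) ?(weights_vdot_le S_w) // => i; rewrite expr1.
  exact: d_le_lambda_max.
exact: lambda_min_le_d.
Qed.

Lemma posdef_eigenvalue_gt0 (P : 'M[R]_n) a : sym_pos_def P -> eigenvalue P a -> 0 < a.
Proof.
case=> _ P_pos /eigenvalue_vdot[x x0 Px].
have : 0 < vdot x (P *m x) by rewrite /vdot mulmxA; exact: P_pos.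
by rewrite Px pmulr_lgt0 // vdot_gt0.
Qed.

Section PositiveDefinite.
Variable P : 'M[R]_n.
Hypotheses (P_pd : sym_pos_def P) (n_gt0 : (0 < n)%N).

Lemma posdef_lambda_min_gt0 : 0 < lambda_min P.
Proof.
have [d [d_eig P_w]] := sym_spectral_weights P_pd.1.
have [i _ d_min] := @arg_minP _ _ _ (Ordinal n_gt0) predT d isT.
apply: lt_le_trans (posdef_eigenvalue_gt0 P_pd (d_eig i)) (lambda_min_ge (d_eig i) _).
move=> x; rewrite -[P in P *m x]expr1; apply: (weights_vdot_ge P_w) => j.
by rewrite expr1; apply: d_min.
Qed.

Lemma posdef_norm2_le : norm2 P <= lambda_max P.
Proof.
have [d [d_eig P_w]] := sym_spectral_weights P_pd.1.
have d_gt0 i : 0 < d i := posdef_eigenvalue_gt0 P_pd (d_eig i).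
have lmax_ge0 : 0 <= lambda_max P.
  exact: le_trans (ltW (d_gt0 (Ordinal n_gt0))) (d_le_lambda_max d_eig P_w _).
rewrite /norm2 -(ger0_norm lmax_ge0) -sqrtr_sqr ler_wsqrtr // P_pd.1.
apply: lambda_max_le => [|x]; first exact: sqr_ge0.
rewrite mulmxE -expr2; apply: (weights_vdot_le P_w) => i.
by rewrite ler_pXn2r ?nnegrE ?(ltW (d_gt0 i)) ?(d_le_lambda_max d_eig P_w).
Qed.

End PositiveDefinite.
End SymmetricMatrices.

Section SpectralNorm.
Variable R : realType.

Lemma norm2_ge0 m n (M : 'M[R]_(m, n)) : 0 <= norm2 M.
Proof. exact: sqrtr_ge0. Qed.

Lemma vdot_mulmx_norm2 m n (M : 'M[R]_(m, n)) x :
  vdot (M *m x) (M *m x) <= norm2 M ^+ 2 * vdot x x.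
Proof.
have MtM_sym : (M^T *m M)^T = M^T *m M by rewrite trmx_mul trmxK.
rewrite vdot_mulmxr vdotC mulmxA.
apply: le_trans (andP (sym_rayleigh x MtM_sym)).2 _; rewrite /norm2.
have [l_ge0|l_lt0] := lerP 0 (lambda_max (M^T *m M)); first by rewrite sqr_sqrtr.
rewrite ler0_sqrtr ?expr0n ?mul0r; last exact: ltW.
exact: mulr_le0_ge0 (ltW l_lt0) (vdot_ge0 x).
Qed.

Lemma vdot_norm2 n (D : 'M[R]_n) x : `|vdot x (D *m x)| <= norm2 D * vdot x x.
Proof.
rewrite -(ler_pXn2r (_ : 0 < 2)%N) ?nnegrE ?mulr_ge0 ?norm2_ge0 ?vdot_ge0 //.
rewrite real_normK ?num_real //; apply: le_trans (vdot_CauchySchwarz x (D *m x)) _.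
by rewrite exprMn expr2 mulrCA ler_wpM2l ?vdot_ge0 ?vdot_mulmx_norm2.
Qed.

Lemma rayleigh_perturb n (P Q : 'M[R]_n) e x : P^T = P -> norm2 (Q - P) <= e ->
  (lambda_min P - e) * vdot x x <= vdot x (Q *m x) <= (lambda_max P + e) * vdot x x.
Proof.
move=> Psym QPe; have /andP[Plo Phi] := sym_rayleigh x Psym.
have /ler_normlP[dlo dhi] := vdot_norm2 (Q - P) x.
have eX := ler_wpM2r (vdot_ge0 x) QPe.
have -> : vdot x (Q *m x) = vdot x (P *m x) + vdot x ((Q - P) *m x).
  by rewrite -{1}(subrK P Q) mulmxDl /vdot mulmxDr mxE addrC.
rewrite mulrBl mulrDl; apply/andP; split; lra.
Qed.

End SpectralNorm.

Section FrobeniusNorm.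
Variable R : realType.

Lemma normF_sqr m n (A : 'M[R]_(m, n)) : normF A ^+ 2 = \sum_i \sum_j A i j ^+ 2.
Proof.
by rewrite sqr_sqrtr // sumr_ge0 // => i _; rewrite sumr_ge0 // => j _; rewrite sqr_ge0.
Qed.

Lemma normF0 m n : normF (0 : 'M[R]_(m, n)) = 0.
Proof.
by rewrite /normF big1 ?sqrtr0 // => i _; rewrite big1 // => j _; rewrite mxE expr0n.
Qed.

Lemma normFN m n (A : 'M[R]_(m, n)) : normF (- A) = normF A.
Proof.
rewrite /normF; congr Num.sqrt; apply: eq_bigr => i _.
by apply: eq_bigr => j _; rewrite mxE sqrrN.
Qed.

Lemma normF_row_mx m n1 n2 (A : 'M[R]_(m, n1)) (B : 'M[R]_(m, n2)) :
  normF (row_mx A B) ^+ 2 = normF A ^+ 2 + normF B ^+ 2.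
Proof.
rewrite !normF_sqr -big_split; apply: eq_bigr => i _ /=; rewrite big_split_ord.
by congr (_ + _); apply: eq_bigr => j _; rewrite ?row_mxEl ?row_mxEr.
Qed.

Lemma normF_vdot_rows m n (C : 'M[R]_(m, n)) :
  normF C ^+ 2 = \sum_i vdot (row i C)^T (row i C)^T.
Proof.
rewrite normF_sqr; apply: eq_bigr => i _; rewrite vdotE.
by apply: eq_bigr => j _; rewrite !mxE expr2.
Qed.

Lemma mxtrace_vdot_rows m n (C : 'M[R]_(m, n)) (Q : 'M[R]_n) :
  \tr (C *m Q *m C^T) = \sum_i vdot (row i C)^T (Q *m (row i C)^T).
Proof.
apply: eq_bigr => i _; rewrite /vdot trmxK mulmxA !mxE.
apply: eq_bigr => j _; rewrite !mxE; congr (_ * _).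
by apply: eq_bigr => k _; rewrite !mxE.
Qed.

Lemma mxtrace_rayleigh_bounds m n lo hi (Q : 'M[R]_n) (C : 'M[R]_(m, n)) :
  (forall x, lo * vdot x x <= vdot x (Q *m x) <= hi * vdot x x) ->
  lo * normF C ^+ 2 <= \tr (C *m Q *m C^T) <= hi * normF C ^+ 2.
Proof.
move=> Q_bounds; rewrite normF_vdot_rows mxtrace_vdot_rows !mulr_sumr.
by apply/andP; split; apply: ler_sum => i _; case/andP: (Q_bounds (row i C)^T).
Qed.

End FrobeniusNorm.

Lemma ler_ratio_bounds (R : realFieldType) (lo hi T1 T2 F1 F2 : R) :
  0 < lo -> 0 <= hi -> 0 <= F1 -> 0 <= F2 ->
  T1 <= hi * F1 -> lo * F2 <= T2 <= hi * F2 -> T1 / T2 <= hi / lo * (F1 / F2).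
Proof.
move=> lo_gt0 hi_ge0 F1_ge0 F2_ge0 T1_le /andP[T2_ge T2_le].
have [F2_0|F2_neq0] := eqVneq F2 0.
  have -> : T2 = 0.
    by apply/le_anti; rewrite (le_trans T2_le) ?(le_trans _ T2_ge) // F2_0 mulr0.
  by rewrite F2_0 !invr0 !mulr0.
have F2_gt0 : 0 < F2 by rewrite lt_def F2_neq0.
have T2_gt0 : 0 < T2 := lt_le_trans (mulr_gt0 lo_gt0 F2_gt0) T2_ge.
rewrite mulrACA -invfM; apply: le_trans (_ : hi * F1 / T2 <= _).
  by rewrite ler_wpM2r // invr_ge0 ltW.
by rewrite ler_wpM2l ?mulr_ge0 // lef_pV2 ?posrE ?mulr_gt0.
Qed.

Lemma normF_C_rR (R : realType) nx ny (Cmo : 'M[R]_(ny, nx)) (Rm : 'M[R]_ny) :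
  normF (C_rR Cmo Rm) ^+ 2 = normF (E_R Cmo Rm) ^+ 2 + normF (C_r Cmo) ^+ 2.
Proof. by rewrite !normF_row_mx normF0 expr0n add0r -normFN -mulNmx opprB. Qed.

Theorem theorem1 (R : realType) (nx nu ny nyp : nat)
  (Ap : 'M[R]_nx) (Bp : 'M[R]_(nx, nu)) (Bw Bwh : 'M[R]_nx)
  (Cmo : 'M[R]_(ny, nx)) (Cpo : 'M[R]_(nyp, nx)) (Dpo : 'M[R]_(nyp, nu))
  (K : 'M[R]_(nx, ny)) (L : 'M[R]_(nu, nx))
  (Hctrb : controllable Ap Bp) (Hobs : observable Ap Cmo)
  (Rm : 'M[R]_ny)
  (HRs : hurwitz (A_R Ap Bp Cmo K L Rm))
  (P PR : 'M[R]_(nx + nx))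
  (HPpd : sym_pos_def P)
  (HP : A_R Ap Bp Cmo K L 1%:M *m P + P *m (A_R Ap Bp Cmo K L 1%:M)^T
        + Bcl Bw Bwh *m (Bcl Bw Bwh)^T = 0)
  (HPR : A_R Ap Bp Cmo K L Rm *m PR + PR *m (A_R Ap Bp Cmo K L Rm)^T
        + Bcl Bw Bwh *m (Bcl Bw Bwh)^T = 0)
  (deltaR : R) (Hd0 : 0 <= deltaR) (Hd1 : deltaR < 1)
  (HdP : norm2 (PR - P) <= deltaR * norm2 P)
  (Hdk : deltaR * kappa P < 1) :
  \tr (C_p Cpo Dpo L *m PR *m (C_p Cpo Dpo L)^T)
    / \tr (C_rR Cmo Rm *m PR *m (C_rR Cmo Rm)^T)
  <= kappa P * (1 + deltaR) / (1 - deltaR * kappa P)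
     * ((normF (C_p Cpo Dpo L)) ^+ 2
        / ((normF (E_R Cmo Rm)) ^+ 2 + (normF (C_r Cmo)) ^+ 2)).
Proof.
have [N0|N_gt0] := posnP (nx + nx).
  have -> : C_p Cpo Dpo L = 0.
    by apply/matrixP => i j; suff : (j < 0)%N by []; rewrite -N0.
  by rewrite !mul0mx mxtrace0 normF0 expr0n !mul0r mulr0.
set lmin := lambda_min P; set lmax := lambda_max P.
have lmin_gt0 : 0 < lmin := posdef_lambda_min_gt0 HPpd N_gt0.
have norm2P : norm2 P <= lmax := posdef_norm2_le HPpd N_gt0.
have lmax_ge0 : 0 <= lmax := le_trans (norm2_ge0 P) norm2P.
have lo_gt0 : 0 < lmin - deltaR * lmax.
  by move: Hdk; rewrite /kappa mulrA ltr_pdivrMr // mul1r subr_gt0.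
have PR_bounds x := rayleigh_perturb x HPpd.1 (le_trans HdP (ler_wpM2l Hd0 norm2P)).
have -> : kappa P * (1 + deltaR) / (1 - deltaR * kappa P)
          = (lmax + deltaR * lmax) / (lmin - deltaR * lmax).
  by rewrite /kappa -/lmin -/lmax; field; rewrite !gt_eqF.
rewrite -normF_C_rR; apply: ler_ratio_bounds; rewrite ?sqr_ge0 ?addr_ge0 ?mulr_ge0 //.
  by case/andP: (mxtrace_rayleigh_bounds (C_p Cpo Dpo L) PR_bounds).
exact: mxtrace_rayleigh_bounds.
Qed.
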